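(* Let $\mathcal{S}$ be an $\mathcal{I}$-weighted boundary stratum with dual graph $\Gamma(\mathcal{S})$, and let $\gamma_1,\gamma_2$ be edge-disjoint loops in $\Gamma(\mathcal{S})$. Then $a=\lambda(\gamma_1)\otimes\lambda(\gamma_2)\in\mathbf{S}_{\mathbb{Q}}(F)$ lies in $N(\mathcal{S})$. Moreover, if $\gamma_1$ and $\gamma_2$ are simple, then the function $\Psi(a)$ on $\mathcal{S}$ is the product of cross-ratios $$\Psi(a)=\prod_{v\in\gamma_1\cap\gamma_2}\,[\gamma_1^{\mathrm{out}}(v),\gamma_1^{\mathrm{in}}(v),\gamma_2^{\mathrm{out}}(v),\gamma_2^{\mathrm{in}}(v)],$$ the product running over the vertices common to $\gamma_1$ and $\gamma_2$.
   Context: $F$ is a totally real number field of degree $g$, with trace pairing $\langle x,y\rangle=\mathrm{Tr}_{F/\mathbb{Q}}(xy)$. A lattice $\mathcal{I}\subset F$ is an additive subgroup of rank $g$; its dual is $\mathcal{I}^\vee=\{x\in F:\langle x,y\rangle\in\mathbb{Z}\ \forall y\in\mathcal{I}\}$. An $\mathcal{I}$-weighted stable curve is a stable curve $X$ of arithmetic genus $g$ and geometric genus $0$, together with an element of $\mathcal{I}$ (its weight) attached to each cusp of $X'=X\setminus\{\text{nodes}\}$ (i.e. to each of the two branches at each node), such that the two cusps at a node have opposite weights, the weights on each component sum to zero, and the weights span $\mathcal{I}$. An $\mathcal{I}$-weighted boundary stratum $\mathcal{S}$ is the moduli space of $\mathcal{I}$-weighted stable curves topologically equivalent (via weight-preserving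 homeomorphisms) to a fixed one. Its dual graph $\Gamma(\mathcal{S})$ has a vertex per component and an edge per node (loops and multiple edges allowed); each edge is oriented and labelled with the weight of the branch at its head (reversing orientation and negating the weight gives the same object). For a loop $\gamma$ in $\Gamma(\mathcal{S})$, $\lambda(\gamma)\in F$ is the unique element with $\langle\lambda(\gamma),r\rangle$ equal, for every edge $e$ of weight $r$, to the number of times $\gamma$ traverses $e$ positively minus the number of times negatively; $\lambda(\gamma)\in\mathcal{I}^\vee$. Two loops are edge-disjoint if they share no edge; a loop is simple if it meets each vertex at most once. For a simple loop $\gamma$ through $v$, $\gamma^{\mathrm{in}}(v)$ (resp. $\gamma^{\mathrm{out}}(v)$) is the marked point on the component of $v$ (a punctured $\mathbb{P}^1$) at which $\gamma$ enters (resp. leaves) that component. $\mathbf{S}_{\mathbb{Q}}(F)$ is the quotient of $F\otimes_{\mathbb{Q}}F$ by the span of $\theta(z)-z$, $\theta(x\otimes y)=y\otimes x$, and $\mathbf{S}_{\mathbb{Z}}(\mathcal{I}^\vee)$ the analogous quotient of $\mathcal{I}^\vee\otimes_{\mathbb{Z}}\mathcal{I}^\vee$; $\mathrm{Sym}_{\mathbb{Q}}(F)$ is the $\theta$-fixed subspace of $F\otimes F$, dual to $\mathbf{S}_{\mathbb{Q}}(F)$ via $\langle a\otimes b,c\otimes d\rangle=\langle a,c\rangle\langle b,d\rangle$. $W(\mathcal{S})\subset\mathrm{Sym}_{\mathbb{Q}}(F)$ is spanned by $r\otimes r$ for $r$ running over the weights of $\mathcal{S}$, and $N(\mathcal{S})\subset\mathbf{S}_{\mathbb{Q}}(F)$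 is its annihilator. For $\alpha\otimes\beta\in N(\mathcal{S})\cap\mathbf{S}_{\mathbb{Z}}(\mathcal{I}^\vee)$ and $X\in\mathcal{S}$: let $\omega_X$ be the unique stable form on $X$ (holomorphic 1-form on $X'$ with at worst simple poles at the cusps) whose residue at a cusp of weight $r$ is $\langle\alpha,r\rangle$, and let $\gamma$ be a path on $X$ whose algebraic intersection number with each node of weight $r$ is $\langle\beta,r\rangle$, avoiding nodes where $\omega_X$ has a pole; then $\Psi(\alpha\otimes\beta)(X)=\exp\left(\int_\gamma\omega_X\right)$, and $\Psi$ extends to a homomorphism from $N(\mathcal{S})\cap\mathbf{S}_{\mathbb{Z}}(\mathcal{I}^\vee)$ to nonvanishing holomorphic functions on $\mathcal{S}$. The cross-ratio is $[a,b,c,d]=\frac{(a-c)(b-d)}{(a-d)(b-c)}$. *)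

From HB Require Import structures.
From mathcomp Require Import all_boot all_order all_algebra all_field.
From mathcomp Require Import Rstruct.
From Stdlib Require Import Reals.
From Coquelicot Require Import Coquelicot.

Set Implicit Arguments.
Unset Strict Implicit.
Unset Printing Implicit Defensive.

Import GRing.Theory Num.Theory.
Local Open Scope ring_scope.

(* Tr_{F/Q}(x) = trace of the Q-linear map y |-> x*y, computed in the basis  *)
(* vbasis fullv.                                                             *)
Definition trF (F : fieldExtType rat) (x : F) : rat :=
  (\sum_(i < \dim {:F}) coord (vbasis fullv) i (x * (vbasis fullv)`_i)).

Definition tpair (F : fieldExtType rat) (x y : F) : rat := trF (x * y).

Definition totally_real (F : fieldExtType rat) : Prop :=
  forall (f : {rmorphism F -> algC}) (x : F), f x \is Num.real.

Definition totally_real_field_of_degree (g : nat) (F : fieldExtType rat) : Prop :=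
  \dim {:F} = g /\ totally_real F.

(* A lattice I in F (additive subgroup of rank g = [F:Q]) is given by a      *)
(* Z-basis b, which is Q-linearly independent; I = Z b_1 + ... + Z b_g.      *)
Definition lattice_basis (g : nat) (F : fieldExtType rat) (b : 'I_g -> F) : Prop :=
  free [seq b i | i <- enum 'I_g].

Definition in_lattice (g : nat) (F : fieldExtType rat) (b : 'I_g -> F) (x : F) : Prop :=
  exists z : 'I_g -> int, x = (\sum_(i < g) b i *~ z i).

(* V = components (vertices), H = cusps of X' = branches at nodes (half-edges),
   vtx h = component carrying the cusp h, opp h = other branch at the same node.
   An edge (node) is a pair {h, opp h}; choosing h as its head orients it and
   labels it by the weight of h. *)
Record dgraph := DGraph {
  dV : finType;
  dH : finType;
  vtx : dH -> dV;
  opp : dH -> dH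
}.

Definition adjacent (G : dgraph) : rel (dV G) :=
  fun u v => [exists h : dH G, (vtx h == u) && (vtx (opp h) == v)].

(* The combinatorial data of an I-weighted boundary stratum: a stable curve of
   arithmetic genus g whose components are all rational (geometric genus 0),
   with no marked points other than the nodes, weights w : H -> F with
   opposite weights at the two branches of a node, zero sum on each component,
   all in I, and spanning I. *)
Definition weighted_stratum (g : nat) (F : fieldExtType rat) (b : 'I_g -> F)
    (G : dgraph) (w : dH G -> F) : Prop :=
  [/\ (forall h : dH G, opp (opp h) = h /\ opp h <> h),
      (forall u v : dV G, connect (@adjacent G) u v),
      (* stability: each P^1 component carries >= 3 special points *)
      (forall v : dV G, leq 3 #|[set h | vtx h == v]|),
      (* arithmetic genus g: #nodes - #components + 1 = g *)
      addn #|dH G| 2 = muln 2 (addn g #|dV G|) &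
   [/\ (forall h, w (opp h) = - w h),
      (forall v : dV G, \sum_(h | vtx h == v) w h = 0),
      (forall h, in_lattice b (w h)) &
      (forall x, in_lattice b x ->
         exists z : dH G -> int, x = (\sum_h w h *~ z h))]].

(* A loop is a nonempty cyclic sequence of steps [h_1; ...; h_n]; step h means
   traversing the edge {opp h, h} from the component of opp h to the component
   of h (i.e. arriving through the cusp h). *)
Definition step_rel (G : dgraph) : rel (dH G) :=
  fun h h' => vtx h == vtx (opp h').

Definition is_loop (G : dgraph) (s : seq (dH G)) : Prop :=
  s <> [::] /\ cycle (@step_rel G) s.

Definition trav (G : dgraph) (s : seq (dH G)) (h : dH G) : int :=
  (Posz (count_mem h s) - Posz (count_mem (opp h) s)).

Definition is_lambda (F : fieldExtType rat) (G : dgraph) (w : dH G -> F)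
    (s : seq (dH G)) (lam : F) : Prop :=
  forall h, tpair lam (w h) = (trav s h)%:~R.

Definition edge_disjoint (G : dgraph) (s1 s2 : seq (dH G)) : Prop :=
  forall h, h \in s1 -> (h \notin s2) && (opp h \notin s2).

Definition simple_loop (G : dgraph) (s : seq (dH G)) : Prop :=
  uniq [seq vtx h | h <- s].

(* For a simple loop s and h in s, h is the cusp gamma^in(vtx h) through which
   s enters the component vtx h, and opp (next s h) is the cusp gamma^out(vtx h)
   through which it leaves it. *)
Definition loop_in (G : dgraph) (s : seq (dH G)) (h : dH G) : dH G := h.
Definition loop_out (G : dgraph) (s : seq (dH G)) (h : dH G) : dH G := opp (next s h).

(* An element of S_Q(F) is represented by a formal sum  sum_i a_i (x) b_i
   (a list of pairs).  The pairing with r (x) r in Sym_Q(F) is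
   sum_i <a_i,r><b_i,r>; N(S) is the annihilator of W(S) = span{r (x) r}. *)
Definition in_N (F : fieldExtType rat) (G : dgraph) (w : dH G -> F)
    (a : seq (F * F)) : Prop :=
  forall h, (\sum_(p <- a) tpair p.1 (w h) * tpair p.2 (w h)) = 0.

Definition cross_count (G : dgraph) (m : nat) (k : nat -> dH G) (h : dH G) : rat :=
  ((\sum_(j < m) (k j == h))%:Z - (\sum_(j < m) (k j == opp h))%:Z)%:~R.

Local Close Scope ring_scope.
Local Open Scope R_scope.

Definition rat2C (q : rat) : C := RtoC (ratr q).

Definition Cexp (z : C) : C :=
  (exp (fst z) * cos (snd z), exp (fst z) * sin (snd z))%R.

(* A point X of the stratum: each component is P^1, in an affine coordinate
   in which no cusp is at infinity; pos h is the coordinate of the cusp h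
   on the component vtx h. *)
Definition stratum_point (G : dgraph) (pos : dH G -> C) : Prop :=
  forall h h', vtx h = vtx h' -> h <> h' -> pos h <> pos h'.

Definition res (F : fieldExtType rat) (G : dgraph) (w : dH G -> F) (alpha : F)
    (h : dH G) : C := rat2C (tpair alpha (w h)).

Definition omega (F : fieldExtType rat) (G : dgraph) (w : dH G -> F) (alpha : F)
    (pos : dH G -> C) (v : dV G) (z : C) : C :=
  \big[Cplus/(RtoC 0)]_(h | vtx h == v) Cdiv (res w alpha h) (Cminus z (pos h)).

Definition seg_integral (f : C -> C) (sigma dsigma : R -> C) : C :=
  (RInt (fun t => fst (Cmult (f (sigma t)) (dsigma t))) 0 1,
   RInt (fun t => snd (Cmult (f (sigma t)) (dsigma t))) 0 1).

(* A closed path on X, avoiding the nodes where omega_X (for alpha) has a pole,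
   whose algebraic intersection number with the node of head-weight w h is
   <beta, w h>.  It is described by m crossings k 0, ..., k (m-1) (crossing j
   goes through the node {k j, opp k j}, from the branch k j to the branch
   opp (k j)) and m segments: segment j is a C^1 path sigma j (derivative
   dsigma j) on the component vtx (k j), from the cusp opp (k (j-1 mod m))
   to the cusp k j, avoiding the poles of omega_X.  The intersection number
   with the node oriented with head h counts crossings leaving the branch h
   positively. *)
Definition prev_index (m j : nat) : nat := modn (j + m).-1 m.

Definition path_on_X (F : fieldExtType rat) (G : dgraph) (w : dH G -> F)
    (pos : dH G -> C) (alpha beta : F)
    (m : nat) (k : nat -> dH G) (sigma dsigma : nat -> R -> C) : Prop :=
  (forall j, leq j.+1 m ->
     [/\ vtx (opp (k (prev_index m j))) = vtx (k j),
         sigma j 0%R = pos (opp (k (prev_index m j))),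
         sigma j 1%R = pos (k j),
         tpair alpha (w (k j)) = (0 : rat) &
         forall t, (0 <= t <= 1)%R ->
           [/\ is_derive (fun u => fst (sigma j u)) t (fst (dsigma j t)),
               is_derive (fun u => snd (sigma j u)) t (snd (dsigma j t)),
               continuous (fun u => fst (dsigma j u)) t,
               continuous (fun u => snd (dsigma j u)) t &
               forall h, vtx h = vtx (k j) -> tpair alpha (w h) <> (0 : rat) ->
                 sigma j t <> pos h]]) /\
  (forall h,
     cross_count m k h = tpair beta (w h)).

Definition path_integral (F : fieldExtType rat) (G : dgraph) (w : dH G -> F)
    (pos : dH G -> C) (alpha : F)
    (m : nat) (k : nat -> dH G) (sigma dsigma : nat -> R -> C) : C :=
  \big[Cplus/(RtoC 0)]_(j < m)
     seg_integral (omega w alpha pos (vtx (k j))) (sigma j) (dsigma j).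

Definition cross_ratio (a b c d : C) : C :=
  Cdiv (Cmult (Cminus a c) (Cminus b d)) (Cmult (Cminus a d) (Cminus b c)).

(* product over the common vertices v of two simple loops of
   [g1out(v), g1in(v), g2out(v), g2in(v)]; a common vertex v corresponds to
   the unique pair (h1 in s1, h2 in s2) with vtx h1 = vtx h2 = v. *)
Definition cross_ratio_product (G : dgraph) (pos : dH G -> C)
    (s1 s2 : seq (dH G)) : C :=
  \big[Cmult/(RtoC 1)]_(h1 <- s1) \big[Cmult/(RtoC 1)]_(h2 <- s2 | vtx h1 == vtx h2)
     cross_ratio (pos (loop_out s1 h1)) (pos (loop_in s1 h1))
                 (pos (loop_out s2 h2)) (pos (loop_in s2 h2)).

(* Pairing a (x) b with r (x) r gives <a, r> <b, r>; for a = lambda(gamma_1),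
   b = lambda(gamma_2) these are the signed traversal counts of the edge of
   weight r, one of which vanishes since the loops are edge-disjoint.

   For the cross-ratio formula, omega_X = sum_h res_h dz / (z - p_h) on each
   component, with integer residues res_h = traversal counts of gamma_1.  On a
   segment from u to v avoiding the poles, exp (int dz / (z - p)) =
   (v - p) / (u - p), because exp (- int z'/z) z has zero derivative.  Hence
   Psi(a) is a product of factors (p_x - p_h)^(res_h n_x) over pairs of cusps
   on a common component, where n_x counts the crossings of the path through
   the node at x, i.e. the traversal count of gamma_2.  For simple loops both
   counts are +-1 exactly at the in- and out-cusps, and the four sign patterns
   at a common vertex assemble to the cross-ratio there. *)

From Pilot Require Import Defs.
From mathcomp Require Import all_boot all_order all_algebra all_field.
From mathcomp Require Import Rstruct.
From mathcomp.real_closed Require Import complex.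
From Stdlib Require Import Reals Lra.
From Coquelicot Require Import Coquelicot.

Set Implicit Arguments.
Unset Strict Implicit.
Unset Printing Implicit Defensive.

Import GRing.Theory.

Section UnitIntervalCalculus.
Local Open Scope R_scope.

Definition clamp01 (u : R) : R := Rmax 0 (Rmin 1 u).

Lemma clamp01_id u : 0 <= u <= 1 -> clamp01 u = u.
Proof. by rewrite /clamp01 /Rmax /Rmin => ?; repeat case: Rle_dec; lra. Qed.

Lemma clamp01_in u : 0 <= clamp01 u <= 1.
Proof. by rewrite /clamp01 /Rmax /Rmin; repeat case: Rle_dec; lra. Qed.

Lemma continuity_clamp01 u : continuity_pt clamp01 u.
Proof.
move=> eps eps_gt0; exists eps; split=> // v [_ /= dist_uv].
apply: Rle_lt_trans dist_uv; rewrite /R_dist /clamp01 /Rmax /Rmin /Rabs.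
by repeat case: Rle_dec; repeat case: Rcase_abs; lra.
Qed.

Lemma interior01 u : Rmin 0 1 < u < Rmax 0 1 -> 0 <= u <= 1.
Proof. by rewrite Rmin_left ?Rmax_right; lra. Qed.

(* [f] need only be continuous on [0, 1]: integrating [f \o clamp01] yields a
   primitive that is differentiable at the endpoints as well. *)
Lemma primitive_on01 (f : R -> R) :
  (forall t, 0 <= t <= 1 -> continuity_pt f t) ->
  ex_RInt f 0 1 /\
  exists P : R -> R, [/\ P 0 = 0, P 1 = RInt f 0 1 &
    forall t, 0 <= t <= 1 -> derivable_pt_lim P t (f t)].
Proof.
move=> f_cont.
pose g u := f (clamp01 u).
have g_cont u : continuous g u.
  apply/continuity_pt_filterlim/continuity_pt_comp; first exact: continuity_clamp01.
  exact/f_cont/clamp01_in.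
have g_int a b : ex_RInt g a b by apply: ex_RInt_continuous => ? _; exact: g_cont.
have gf u : Rmin 0 1 < u < Rmax 0 1 -> g u = f u.
  by move=> /interior01 u01; rewrite /g clamp01_id.
split; first exact: ex_RInt_ext gf (g_int 0 1).
exists (fun t => RInt g 0 t); split.
- exact: RInt_point.
- exact: RInt_ext gf.
- move=> t t01; have -> : f t = g t by rewrite /g clamp01_id.
  apply/is_derive_Reals.
  apply: is_derive_RInt (g_cont t); apply: filter_forall => u.
  exact: RInt_correct.
Qed.

Lemma derivable_pt_lim_eq f t l l' :
  derivable_pt_lim f t l -> l = l' -> derivable_pt_lim f t l'.
Proof. by move=> ? <-. Qed.

Lemma constant_on01 (K : R -> R) :
  (forall t, 0 <= t <= 1 -> derivable_pt_lim K t 0) -> K 1 = K 0.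
Proof.
move=> K'0; symmetry; apply: eq_is_derive; last lra.
by move=> t t01; apply/is_derive_Reals/K'0.
Qed.

End UnitIntervalCalculus.

Section ScalarLinearODE.
Local Open Scope R_scope.
Variables x y dx dy A B a b : R -> R.
Hypothesis x_derive : forall t, 0 <= t <= 1 -> derivable_pt_lim x t (dx t).
Hypothesis y_derive : forall t, 0 <= t <= 1 -> derivable_pt_lim y t (dy t).
Hypothesis A_derive : forall t, 0 <= t <= 1 -> derivable_pt_lim A t (a t).
Hypothesis B_derive : forall t, 0 <= t <= 1 -> derivable_pt_lim B t (b t).
Hypothesis A0 : A 0 = 0.
Hypothesis B0 : B 0 = 0.
Hypothesis ode : forall t, 0 <= t <= 1 ->
  dx t = a t * x t - b t * y t /\ dy t = b t * x t + a t * y t.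

(* Since [x + i y] solves [z' = (a + i b) z], [exp (-(A + i B)) (x + i y)]
   has zero derivative. *)
Lemma scalar_linear_ode_flow : Cmult (Cexp (A 1, B 1)) (x 0, y 0) = (x 1, y 1).
Proof.
pose K1 t := exp (- A t) * (x t * cos (B t) + y t * sin (B t)).
pose K2 t := exp (- A t) * (y t * cos (B t) - x t * sin (B t)).
have dE t : 0 <= t <= 1 -> derivable_pt_lim (fun u => exp (- A u)) t (exp (- A t) * - a t).
  move=> t01; exact: derivable_pt_lim_comp
    (derivable_pt_lim_opp _ _ _ (A_derive t01)) (derivable_pt_lim_exp _).
have dC t : 0 <= t <= 1 -> derivable_pt_lim (fun u => cos (B u)) t (- sin (B t) * b t).
  move=> t01; exact: derivable_pt_lim_comp (B_derive t01) (derivable_pt_lim_cos _).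
have dS t : 0 <= t <= 1 -> derivable_pt_lim (fun u => sin (B u)) t (cos (B t) * b t).
  move=> t01; exact: derivable_pt_lim_comp (B_derive t01) (derivable_pt_lim_sin _).
have K1_const : K1 1 = K1 0.
  apply: constant_on01 => t t01.
  apply: (derivable_pt_lim_eq (derivable_pt_lim_mult _ _ _ _ _ (dE t t01)
    (derivable_pt_lim_plus _ _ _ _ _
      (derivable_pt_lim_mult _ _ _ _ _ (x_derive t01) (dC t t01))
      (derivable_pt_lim_mult _ _ _ _ _ (y_derive t01) (dS t t01))))).
  by rewrite /plus_fct /mult_fct (proj1 (ode t01)) (proj2 (ode t01)); ring.
have K2_const : K2 1 = K2 0.
  apply: constant_on01 => t t01.
  apply: (derivable_pt_lim_eq (derivable_pt_lim_mult _ _ _ _ _ (dE t t01)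
    (derivable_pt_lim_minus _ _ _ _ _
      (derivable_pt_lim_mult _ _ _ _ _ (y_derive t01) (dC t t01))
      (derivable_pt_lim_mult _ _ _ _ _ (x_derive t01) (dS t t01))))).
  by rewrite /minus_fct /mult_fct (proj1 (ode t01)) (proj2 (ode t01)); ring.
have x0E : x 0 = K1 1 by rewrite K1_const /K1 A0 B0 Ropp_0 exp_0 cos_0 sin_0; ring.
have y0E : y 0 = K2 1 by rewrite K2_const /K2 A0 B0 Ropp_0 exp_0 cos_0 sin_0; ring.
have e : exp (A 1) * exp (- A 1) = 1 by rewrite -exp_plus Rplus_opp_r exp_0.
have sc := sin2_cos2 (B 1); rewrite /Rsqr in sc.
rewrite x0E y0E /K1 /K2 /Cexp /Cmult /=; congr pair.
- transitivity (exp (A 1) * exp (- A 1) * x 1 *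
    (sin (B 1) * sin (B 1) + cos (B 1) * cos (B 1))); first ring.
  by rewrite e sc; ring.
- transitivity (exp (A 1) * exp (- A 1) * y 1 *
    (sin (B 1) * sin (B 1) + cos (B 1) * cos (B 1))); first ring.
  by rewrite e sc; ring.
Qed.

End ScalarLinearODE.

Definition C1_path (z dz : R -> C) : Prop :=
  forall t, (0 <= t <= 1)%R ->
  [/\ is_derive (fun u => fst (z u)) t (fst (dz t)),
      is_derive (fun u => snd (z u)) t (snd (dz t)),
      continuous (fun u => fst (dz u)) t &
      continuous (fun u => snd (dz u)) t].

Definition seg_has_integral (f : C -> C) (z dz : R -> C) (v : C) : Prop :=
  is_RInt (fun t => fst (Cmult (f (z t)) (dz t))) 0 1 (fst v) /\
  is_RInt (fun t => snd (Cmult (f (z t)) (dz t))) 0 1 (snd v).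

Ltac continuity_pt_rules :=
  repeat first [ assumption | by apply: continuity_pt_const => ? ?
    | apply: continuity_pt_plus | apply: continuity_pt_minus
    | apply: continuity_pt_mult | apply: continuity_pt_opp | apply: continuity_pt_inv ].

Lemma C_norm2_neq0 (u : C) : u <> RtoC 0 -> (fst u * fst u + snd u * snd u <> 0)%R.
Proof.
case: u => a b /= nz norm0; apply: nz.
have -> : a = 0%R by nra.
by have -> : b = 0%R by nra.
Qed.

Section LogarithmicDerivative.
Local Open Scope R_scope.
Variables z dz : R -> C.
Hypothesis z_C1 : C1_path z dz.
Hypothesis z_neq0 : forall t, 0 <= t <= 1 -> z t <> RtoC 0.

Lemma continuity_dlog t : 0 <= t <= 1 ->
  continuity_pt (fun u => fst (Cmult (Cinv (z u)) (dz u))) t /\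
  continuity_pt (fun u => snd (Cmult (Cinv (z u)) (dz u))) t.
Proof.
move=> t01; have [dx dy cx cy] := z_C1 t01.
have {}cx := proj2 (continuity_pt_filterlim _ _) cx.
have {}cy := proj2 (continuity_pt_filterlim _ _) cy.
have zx : continuity_pt (fun u => fst (z u)) t.
  by apply: derivable_continuous_pt; exists (fst (dz t)); apply/is_derive_Reals.
have zy : continuity_pt (fun u => snd (z u)) t.
  by apply: derivable_continuous_pt; exists (snd (dz t)); apply/is_derive_Reals.
have nz := C_norm2_neq0 (z_neq0 t01).
by rewrite /Cmult /Cinv /=; split; continuity_pt_rules; rewrite /= !Rmult_1_r.
Qed.

Lemma seg_has_integral_Cinv : seg_has_integral Cinv z dz (seg_integral Cinv z dz).
Proof.
by split; apply/RInt_correct/(proj1 (primitive_on01 _)) => t /continuity_dlog [].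
Qed.

Lemma Cexp_seg_integral_Cinv : Cmult (Cexp (seg_integral Cinv z dz)) (z 0) = z 1.
Proof.
have [_ [A [A0 A1 dA]]] := primitive_on01 (fun t t01 => proj1 (continuity_dlog t01)).
have [_ [B [B0 B1 dB]]] := primitive_on01 (fun t t01 => proj2 (continuity_dlog t01)).
have zx t : 0 <= t <= 1 -> derivable_pt_lim (fun u => fst (z u)) t (fst (dz t)).
  by case/z_C1 => /is_derive_Reals.
have zy t : 0 <= t <= 1 -> derivable_pt_lim (fun u => snd (z u)) t (snd (dz t)).
  by case/z_C1 => _ /is_derive_Reals.
rewrite /seg_integral -A1 -B1 [z 0]surjective_pairing [z 1]surjective_pairing.
apply: scalar_linear_ode_flow zx zy dA dB A0 B0 _ => t t01.
have: dz t = Cmult (z t) (Cmult (Cinv (z t)) (dz t)).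
  by rewrite Cmult_assoc Cinv_r ?Cmult_1_l //; exact: z_neq0.
move: (Cmult (Cinv (z t)) (dz t)) => L ->.
by case: (z t) L => x y [l1 l2] /=; split; ring.
Qed.

End LogarithmicDerivative.

Section SegmentIntegrals.
Local Open Scope R_scope.
Variables z dz : R -> C.

Lemma seg_integral_unique f v : seg_has_integral f z dz v -> seg_integral f z dz = v.
Proof.
by case=> /is_RInt_unique e1 /is_RInt_unique e2; rewrite /seg_integral e1 e2; case: v {e1 e2}.
Qed.

Lemma seg_has_integral_ext f g v :
  (forall w, f w = g w) -> seg_has_integral f z dz v -> seg_has_integral g z dz v.
Proof.
by move=> fg [i1 i2]; split; [apply: is_RInt_ext i1 | apply: is_RInt_ext i2] => t _ /=; rewrite fg.
Qed.

Lemma seg_has_integral0 : seg_has_integral (fun _ => RtoC 0) z dz (RtoC 0).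
Proof.
split; apply: (is_RInt_ext (fun _ => 0)) => [t _ /=|]; try ring.
all: by have := @is_RInt_const R_NormedModule 0 1 0; rewrite scal_zero_r.
Qed.

Lemma seg_has_integral_add f g v1 v2 :
  seg_has_integral f z dz v1 -> seg_has_integral g z dz v2 ->
  seg_has_integral (fun w => Cplus (f w) (g w)) z dz (Cplus v1 v2).
Proof.
case=> f1 f2 [g1 g2]; split.
- by apply: is_RInt_ext (is_RInt_plus _ _ _ _ _ _ f1 g1) => t _ /=; rewrite /plus /=; ring.
- by apply: is_RInt_ext (is_RInt_plus _ _ _ _ _ _ f2 g2) => t _ /=; rewrite /plus /=; ring.
Qed.

Lemma seg_has_integral_scale (c : R) f v :
  seg_has_integral f z dz v ->
  seg_has_integral (fun w => Cmult (RtoC c) (f w)) z dz (c * fst v, c * snd v).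
Proof.
case=> f1 f2; split.
- by apply: is_RInt_ext (is_RInt_scal _ _ _ c _ f1) => t _ /=; rewrite /scal /= /mult /=; ring.
- by apply: is_RInt_ext (is_RInt_scal _ _ _ c _ f2) => t _ /=; rewrite /scal /= /mult /=; ring.
Qed.

End SegmentIntegrals.

Section Products.
Local Open Scope ring_scope.
Variable K : fieldType.

Lemma prod_multiplicity (T : finType) (F : T -> K) m (k : nat -> T) :
  \prod_(j < m) F (k j) = \prod_x F x ^+ (\sum_(j < m) (k j == x)).
Proof.
rewrite (partition_big (fun j : 'I_m => k j) predT) //=; apply: eq_bigr => x _.
rewrite (eq_bigr (fun _ => F x)) => [|j /eqP -> //].
by rewrite prodr_const -sum1_card big_mkcond.
Qed.

Lemma prodf_expz (I : Type) (r : seq I) (P : pred I) (F : I -> K) (n : int) :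
  \prod_(i <- r | P i) F i ^ n = (\prod_(i <- r | P i) F i) ^ n.
Proof. by symmetry; apply: (big_morph (fun y => y ^ n)) => [a b|]; rewrite ?expfzMl ?exp1rz. Qed.

Lemma prod_prev_index (F : nat -> K) m :
  \prod_(j < m) F (prev_index m j) = \prod_(j < m) F j.
Proof.
case: m => [|m]; first by rewrite !big_ord0.
have lt_prev (j : 'I_m.+1) : ((j + m) %% m.+1 < m.+1)%nat by rewrite ltn_mod.
pose prev (j : 'I_m.+1) := Ordinal (lt_prev j).
have prev_inj : injective prev.
  move=> a b /(congr1 val) /= /eqP; rewrite eqn_modDr !modn_small // => /eqP.
  exact: val_inj.
by rewrite [RHS](reindex_inj prev_inj); apply: eq_bigr => j _; rewrite /prev_index addnS.
Qed.

Lemma expz_sign_product (y : K) (a1 b1 a2 b2 : bool) :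
  (y != 0) || ~~ [|| a1 && a2, b1 && b2, a1 && b2 | b1 && a2] ->
  y ^ ((a1%:Z - b1%:Z) * (a2%:Z - b2%:Z)) =
  (if a1 && a2 then y else 1) * (if b1 && b2 then y else 1) /
  ((if a1 && b2 then y else 1) * (if b1 && a2 then y else 1)).
Proof.
case/orP => [y_neq0|].
  by case: a1; case: b1; case: a2; case: b2;
    rewrite /= ?subrr ?subr0 ?sub0r ?mulr0 ?mul0r ?mulr1 ?mul1r ?mulrNN ?mulN1r ?mulrN1
      ?expr0z ?expr1z ?exprN1 ?invr1 ?divr1 ?mulfV ?mulf_neq0 ?mulr1.
by case: a1; case: b1; case: a2; case: b2 => //= _;
  rewrite ?subrr ?subr0 ?sub0r ?mulr0 ?mul0r ?expr0z ?mulr1 ?invr1 ?mul1r.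
Qed.

Lemma prod_image (T : finType) (s : seq T) (f : T -> T) (A : pred T) (F : T -> K) :
  uniq s -> injective f -> A =i [seq f x | x <- s] ->
  \prod_(h | A h) F h = \prod_(x <- s) F (f x).
Proof.
move=> s_uniq f_inj A_im; rewrite -(big_map f predT F) big_uniq ?map_inj_uniq //.
by apply: eq_bigl => h; rewrite -A_im.
Qed.

Definition crossr (a b c d : K) := (a - c) * (b - d) / ((a - d) * (b - c)).

Lemma crossrE (a b c d : K) : crossr a b c d = (d - b) * (c - a) / ((c - b) * (d - a)).
Proof.
rewrite /crossr -[d - b]opprB -[c - a]opprB -[c - b]opprB -[d - a]opprB !mulrNN.
by rewrite [(b - d) * _]mulrC ?[(b - c) * _]mulrC.
Qed.

End Products.

(* Coquelicot's [C] carries no MathComp field structure, so products of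
   complex numbers are computed in [R[i]] through the isomorphism [CtoRi]. *)
Section ComplexTransfer.
Local Open Scope ring_scope.
Local Open Scope complex_scope.

Definition CtoRi (u : C) : R[i] := Complex u.1 u.2.

Lemma CtoRi_inj : injective CtoRi.
Proof. by case=> [a1 a2] [b1 b2] [-> ->]. Qed.

Lemma CtoRiM u v : CtoRi (Cmult u v) = CtoRi u * CtoRi v.
Proof. by case: u; case: v. Qed.

Lemma CtoRiB u v : CtoRi (Cminus u v) = CtoRi u - CtoRi v.
Proof. by case: u; case: v. Qed.

Lemma CtoRi1 : CtoRi (RtoC 1) = 1.
Proof. by []. Qed.

Lemma CtoRiV u : CtoRi (Cinv u) = (CtoRi u)^-1.
Proof.
case: u => a1 a2; rewrite /CtoRi /Cinv /=.
have -> : (a1 +i* a2)^-1 = (a1 / (a1 ^+ 2 + a2 ^+ 2)) -i* (a2 / (a1 ^+ 2 + a2 ^+ 2)) by [].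
by rewrite !RdivE !RplusE !RmultE !RoppE !mulr1 !expr2 -mulNr.
Qed.

Lemma CtoRi_prod (I : Type) (r : seq I) (P : pred I) (F : I -> C) :
  CtoRi (\big[Cmult/RtoC 1]_(i <- r | P i) F i) = \prod_(i <- r | P i) CtoRi (F i).
Proof. exact: (big_morph CtoRi CtoRiM CtoRi1). Qed.

Lemma CtoRi_cross_ratio a b c d :
  CtoRi (cross_ratio a b c d) = crossr (CtoRi a) (CtoRi b) (CtoRi c) (CtoRi d).
Proof. by rewrite /cross_ratio /Cdiv CtoRiM CtoRiV !CtoRiM !CtoRiB. Qed.

End ComplexTransfer.

Section ComplexExponential.
Local Open Scope R_scope.

Lemma Cexp_add u v : Cexp (Cplus u v) = Cmult (Cexp u) (Cexp v).
Proof.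
case: u => a b; case: v => c d; rewrite /Cexp /Cplus /Cmult /=.
by rewrite exp_plus cos_plus sin_plus; f_equal; ring.
Qed.

Lemma Cexp0 : Cexp (RtoC 0) = RtoC 1.
Proof. by rewrite /Cexp /RtoC /= exp_0 cos_0 sin_0 Rmult_1_r Rmult_0_r. Qed.

End ComplexExponential.

Section ExponentialScaling.
Local Open Scope ring_scope.

Lemma CtoRi_Cexp_natscale k a b :
  CtoRi (Cexp (Rmult (INR k) a, Rmult (INR k) b)) = CtoRi (Cexp (a, b)) ^+ k.
Proof.
elim: k => [|k IH]; first by rewrite /= !Rmult_0_l Cexp0.
by rewrite S_INR !Rmult_plus_distr_r !Rmult_1_l exprSr -IH -CtoRiM -Cexp_add.
Qed.

Lemma CtoRi_Cexp_opp a b : CtoRi (Cexp (Ropp a, Ropp b)) = (CtoRi (Cexp (a, b)))^-1.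
Proof.
apply/esym/mulr1_eq; rewrite -CtoRiM -Cexp_add /Cplus /=.
by rewrite !Rplus_opp_r Cexp0.
Qed.

Lemma CtoRi_Cexp_intscale (n : int) a b :
  CtoRi (Cexp (Rmult n%:~R a, Rmult n%:~R b)) = CtoRi (Cexp (a, b)) ^ n.
Proof.
case: n => k.
- have -> : (Posz k)%:~R = INR k by rewrite INRE.
  exact: CtoRi_Cexp_natscale.
- have -> : (Negz k)%:~R = Ropp (INR k.+1) by rewrite NegzE mulrNz INRE.
  rewrite !Ropp_mult_distr_l_reverse CtoRi_Cexp_opp.
  by rewrite CtoRi_Cexp_natscale.
Qed.

End ExponentialScaling.

Section Residues.
Local Open Scope ring_scope.

Lemma Cminus_eq0 u v : Cminus u v = RtoC 0 -> u = v.
Proof. by case: u => a b; case: v => c d [? ?]; congr pair; lra. Qed.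

Lemma C1_path_sub s ds p : C1_path s ds -> C1_path (fun t => Cminus (s t) p) ds.
Proof.
move=> sC1 t /sC1 [/is_derive_Reals dx /is_derive_Reals dy cx cy].
split=> //; apply/is_derive_Reals; rewrite -[X in derivable_pt_lim _ _ X]Rplus_0_r.
- exact: derivable_pt_lim_plus dx (derivable_pt_lim_const _ _).
- exact: derivable_pt_lim_plus dy (derivable_pt_lim_const _ _).
Qed.

Lemma seg_has_integral_pole s ds p :
  C1_path s ds -> (forall t, (0 <= t <= 1)%R -> s t <> p) ->
  exists2 v, seg_has_integral (fun w => Cinv (Cminus w p)) s ds v &
    CtoRi (Cexp v) = (CtoRi (s 1%R) - CtoRi p) / (CtoRi (s 0%R) - CtoRi p).
Proof.
move=> sC1 avoid.
have zC1 := C1_path_sub p sC1.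
have z_neq0 t : (0 <= t <= 1)%R -> Cminus (s t) p <> RtoC 0.
  by move=> t01 /Cminus_eq0; apply: avoid.
exists (seg_integral Cinv (fun t => Cminus (s t) p) ds).
  exact: seg_has_integral_Cinv.
have := congr1 CtoRi (Cexp_seg_integral_Cinv zC1 z_neq0).
rewrite CtoRiM !CtoRiB => <-; rewrite mulfK // subr_eq0.
apply/eqP => /CtoRi_inj s0p; apply: (avoid 0%R) => //; lra.
Qed.

Lemma seg_has_integral_residue (n : int) p s ds :
  C1_path s ds -> (n != 0 -> forall t, (0 <= t <= 1)%R -> s t <> p) ->
  exists2 v, seg_has_integral (fun w => Cdiv (RtoC n%:~R) (Cminus w p)) s ds v &
    CtoRi (Cexp v) = ((CtoRi (s 1%R) - CtoRi p) / (CtoRi (s 0%R) - CtoRi p)) ^ n.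
Proof.
move=> sC1 avoid; have [->|n_neq0] := eqVneq n 0.
  exists (RtoC 0); last by rewrite Cexp0 CtoRi1 expr0z.
  apply: (seg_has_integral_ext _ (seg_has_integral0 s ds)) => w.
  by rewrite /Cdiv /Cmult /RtoC /= (_ : 0%:~R = 0%R) //; congr pair; ring.
have [v vI vE] := seg_has_integral_pole sC1 (avoid n_neq0).
exists (Rmult n%:~R v.1, Rmult n%:~R v.2); first exact: seg_has_integral_scale.
by rewrite CtoRi_Cexp_intscale -vE; case: v {vI vE}.
Qed.

Lemma seg_has_integral_residues (I : Type) (r : seq I) (P : pred I)
    (n : I -> int) (q : I -> C) s ds :
  C1_path s ds ->
  (forall i, P i -> n i != 0 -> forall t, (0 <= t <= 1)%R -> s t <> q i) ->
  exists2 v, seg_has_integral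
      (fun w => \big[Cplus/RtoC 0]_(i <- r | P i) Cdiv (RtoC (n i)%:~R) (Cminus w (q i))) s ds v &
    CtoRi (Cexp v) =
      \prod_(i <- r | P i) ((CtoRi (s 1%R) - CtoRi (q i)) / (CtoRi (s 0%R) - CtoRi (q i))) ^ n i.
Proof.
move=> sC1 avoid; elim: r => [|i r [v vI vE]].
  exists (RtoC 0); last by rewrite big_nil Cexp0 CtoRi1.
  by apply: (seg_has_integral_ext _ (seg_has_integral0 s ds)) => w; rewrite big_nil.
case Pi: (P i); last first.
  by exists v; [apply: (seg_has_integral_ext _ vI) => w | rewrite vE]; rewrite big_cons Pi.
have [u uI uE] := seg_has_integral_residue sC1 (avoid i Pi).
exists (Cplus u v); last by rewrite Cexp_add CtoRiM uE vE big_cons Pi.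
by apply: (seg_has_integral_ext _ (seg_has_integral_add uI vI)) => w; rewrite big_cons Pi.
Qed.

End Residues.

Section LoopCusps.
Local Open Scope ring_scope.
Variables (K : fieldType) (G : dgraph) (P : dH G -> K).
Hypothesis oppK : involutive (@Defs.opp G).
Hypothesis P_inj : forall h h' : dH G, vtx h = vtx h' -> P h = P h' -> h = h'.

Definition cusp_sign (s : seq (dH G)) h : int := (h \in s)%:Z - (Defs.opp h \in s)%:Z.

Lemma trav_uniq (s : seq (dH G)) h : uniq s -> trav s h = cusp_sign s h.
Proof. by move=> s_uniq; rewrite /trav /cusp_sign !count_uniq_mem. Qed.

Lemma loop_out_inj (s : seq (dH G)) : uniq s -> injective (loop_out s).
Proof. by move=> s_uniq x y /(can_inj oppK); apply: (can_inj (prev_next s_uniq)). Qed.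

Lemma mem_loop_out (s : seq (dH G)) : uniq s ->
  [pred h | Defs.opp h \in s] =i [seq loop_out s x | x <- s].
Proof.
move=> s_uniq h; rewrite inE; apply/idP/mapP => [hs|[x xs ->]].
  by exists (prev s (Defs.opp h)); rewrite ?mem_prev // /loop_out next_prev // oppK.
by rewrite /loop_out oppK mem_next.
Qed.

Lemma vtx_loop_out (s : seq (dH G)) :
  cycle (@step_rel G) s -> {in s, forall h, vtx (loop_out s h) = vtx h}.
Proof. by move=> s_cycle h hs; have /eqP <- := next_cycle s_cycle hs. Qed.

Lemma prod_common_vertices (s1 s2 : seq (dH G)) (A B : pred (dH G))
    (f1 f2 : dH G -> dH G) (y : dH G -> dH G -> K) :
  uniq s1 -> uniq s2 -> injective f1 -> injective f2 ->
  A =i [seq f1 x | x <- s1] -> B =i [seq f2 x | x <- s2] ->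
  {in s1, forall h, vtx (f1 h) = vtx h} -> {in s2, forall h, vtx (f2 h) = vtx h} ->
  \prod_x \prod_(h | vtx h == vtx x) (if A h && B x then y x h else 1)
  = \prod_(h1 <- s1) \prod_(h2 <- s2 | vtx h1 == vtx h2) y (f2 h2) (f1 h1).
Proof.
move=> s1_uniq s2_uniq f1_inj f2_inj A_im B_im vtx_f1 vtx_f2.
transitivity (\prod_(h | A h) \prod_(x | B x) (if vtx h == vtx x then y x h else 1)).
  rewrite (eq_bigr (fun x => \prod_h (if vtx h == vtx x then
      (if A h && B x then y x h else 1) else 1))); last by move=> x _; rewrite big_mkcond.
  rewrite exchange_big /= [RHS]big_mkcond /=; apply: eq_bigr => h _.
  case: (boolP (A h)) => Ah; last by rewrite big1 // => x _; case: ifP.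
  by rewrite [RHS]big_mkcond /=; apply: eq_bigr => x _; case: (B x); case: (vtx h == vtx x).
rewrite (prod_image _ s1_uniq f1_inj A_im) big_seq [RHS]big_seq.
apply: eq_bigr => h1 h1s; rewrite (prod_image _ s2_uniq f2_inj B_im).
rewrite [RHS]big_mkcond big_seq [RHS]big_seq.
by apply: eq_bigr => h2 h2s; rewrite vtx_f1 // vtx_f2.
Qed.

(* Pairing a cusp h of the first loop with a cusp x of the second on the same
   component contributes (P x - P h)^(+-1) according to whether h and x are
   in- or out-cusps; the four combinations at a common vertex assemble to the
   cross-ratio there.  Edge-disjointness rules out the zero factor x = h. *)
Lemma prod_cusp_signs_cross_ratio (s1 s2 : seq (dH G)) :
  uniq s1 -> uniq s2 -> cycle (@step_rel G) s1 -> cycle (@step_rel G) s2 ->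
  edge_disjoint s1 s2 ->
  \prod_x \prod_(h | vtx h == vtx x) (P x - P h) ^ (cusp_sign s1 h * cusp_sign s2 x)
  = \prod_(h1 <- s1) \prod_(h2 <- s2 | vtx h1 == vtx h2)
      crossr (P (loop_out s1 h1)) (P h1) (P (loop_out s2 h2)) (P h2).
Proof.
move=> s1_uniq s2_uniq s1_cycle s2_cycle disj.
pose term (A B : pred (dH G)) x h := if A h && B x then P x - P h else 1.
pose in1 h := h \in s1; pose out1 h := Defs.opp h \in s1.
pose in2 h := h \in s2; pose out2 h := Defs.opp h \in s2.
have split_sign x h : vtx h == vtx x ->
  (P x - P h) ^ (cusp_sign s1 h * cusp_sign s2 x) =
  term in1 in2 x h * term out1 out2 x h / (term in1 out2 x h * term out1 in2 x h).
  move=> /eqP vtx_hx; apply: expz_sign_product.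
  case: (eqVneq (P x - P h) 0) => [/eqP|] //=; rewrite subr_eq0 => /eqP Pxh.
  have <- := P_inj vtx_hx (esym Pxh).
  apply/negP => /or4P [] /andP [Ha Hb]; move: (disj _ Ha); rewrite ?oppK Hb ?andbF //.
rewrite (eq_bigr _ (fun x _ => eq_bigr _ (split_sign x))).
under eq_bigr => x _ do rewrite prodf_div !big_split /=.
rewrite prodf_div !big_split /=.
have in1_im : in1 =i [seq idfun x | x <- s1] by move=> h; rewrite map_id.
have in2_im : in2 =i [seq idfun x | x <- s2] by move=> h; rewrite map_id.
have out1_im : out1 =i [seq loop_out s1 x | x <- s1] by exact: mem_loop_out.
have out2_im : out2 =i [seq loop_out s2 x | x <- s2] by exact: mem_loop_out.
have vtx_id (s : seq (dH G)) : {in s, forall h : dH G, vtx (idfun h) = vtx h} by [].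
have out1_inj := loop_out_inj s1_uniq; have out2_inj := loop_out_inj s2_uniq.
have vtx_out1 := vtx_loop_out s1_cycle; have vtx_out2 := vtx_loop_out s2_cycle.
have id_inj : injective (@idfun (dH G)) by [].
pose PD x h := P x - P h.
rewrite /term (prod_common_vertices PD s1_uniq s2_uniq id_inj id_inj in1_im in2_im)
  ?(prod_common_vertices PD s1_uniq s2_uniq out1_inj out2_inj out1_im out2_im)
  ?(prod_common_vertices PD s1_uniq s2_uniq id_inj out2_inj in1_im out2_im)
  ?(prod_common_vertices PD s1_uniq s2_uniq out1_inj id_inj out1_im in2_im) //.
under [RHS]eq_bigr => h1 _ do
  (under eq_bigr => h2 _ do rewrite crossrE; rewrite prodf_div !big_split /=).
by rewrite prodf_div !big_split.
Qed.

(* Segment j runs on one component from the cusp [opp (k (prev_index m j))]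
   to the cusp [k j], so its factor is [Phi (k j) / Phi (opp (k (prev_index m j)))]
   with [Phi x = \prod_(h | vtx h == vtx x) (P x - P h) ^ t1 h]; regrouping
   the segments by the nodes they cross yields the intersection numbers [t2]. *)
Lemma prod_segment_ratios (t1 t2 : dH G -> int) (m : nat) (k : nat -> dH G) :
  (forall h, t1 (Defs.opp h) = - t1 h) ->
  (forall j, (j < m)%nat -> vtx (Defs.opp (k (prev_index m j))) = vtx (k j)) ->
  (forall j, (j < m)%nat -> t1 (k j) = 0) ->
  (forall h, t2 h = (\sum_(j < m) (k j == h))%:Z - (\sum_(j < m) (k j == Defs.opp h))%:Z) ->
  \prod_(j < m) \prod_(h | vtx h == vtx (k j))
      ((P (k j) - P h) / (P (Defs.opp (k (prev_index m j))) - P h)) ^ t1 h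
  = \prod_x \prod_(h | vtx h == vtx x) (P x - P h) ^ (t1 h * t2 x).
Proof.
move=> t1_opp vtx_seg t1_k t2E.
pose Phi x := \prod_(h | vtx h == vtx x) (P x - P h) ^ t1 h.
have Phi_neq0 x : t1 x = 0 -> Phi x != 0.
  move=> t1x; apply/prodf_neq0 => h /eqP vtx_hx; rewrite expfz_eq0 negb_and.
  case: (eqVneq h x) => [->|hx]; first by rewrite t1x eqxx.
  apply/orP; right; rewrite subr_eq0.
  by apply: contra_neq hx => Pxh; apply: P_inj vtx_hx (esym Pxh).
rewrite (eq_bigr (fun j : 'I_m => Phi (k j) / Phi (Defs.opp (k (prev_index m j))))); last first.
  have expfz_div (a b : K) n : (a / b) ^ n = a ^ n / b ^ n.
    by rewrite expfzMl exprz_inv invr_expz.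
  move=> j _; under eq_bigr => h _ do rewrite expfz_div.
  by rewrite prodf_div /Phi (vtx_seg j (ltn_ord j)).
rewrite prodf_div (prod_prev_index (fun j => Phi (Defs.opp (k j)))).
rewrite (prod_multiplicity Phi) (prod_multiplicity (fun x => Phi (Defs.opp x))).
rewrite [X in _ / X](reindex_inj (can_inj oppK)) /= -prodf_div.
apply: eq_bigr => x _; under [RHS]eq_bigr => h _ do rewrite -exprz_exp.
rewrite prodf_expz -/(Phi x) t2E oppK.
have [t1x|t1x] := eqVneq (t1 x) 0; first by rewrite expfzDr ?Phi_neq0 // -exprnN.
have count0 y : t1 y != 0 -> (\sum_(j < m) (k j == y) = 0)%nat.
  move=> t1y; apply: big1 => j _; apply/eqP; rewrite eqb0.
  by apply: contra t1y => /eqP <-; rewrite t1_k.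
by rewrite !count0 ?t1_opp ?oppr_eq0 // !expr0 subrr expr0z invr1 mulr1.
Qed.

End LoopCusps.

Section Traversals.
Local Open Scope ring_scope.
Variables (F : fieldExtType rat) (G : dgraph) (w : dH G -> F).
Hypothesis oppK : involutive (@Defs.opp G).

Lemma trav_opp (s : seq (dH G)) h : trav s (Defs.opp h) = - trav s h.
Proof. by rewrite /trav oppK opprB. Qed.

Lemma trav_edge_disjoint (s1 s2 : seq (dH G)) h :
  edge_disjoint s1 s2 -> trav s1 h * trav s2 h = 0.
Proof.
move=> disj; apply/eqP; rewrite mulf_eq0 /trav.
have [h1|h1] := boolP (h \in s1).
  by case/andP: (disj h h1) => /count_memPn -> /count_memPn ->; rewrite orbT.
have [oh1|oh1] := boolP (Defs.opp h \in s1).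
  case/andP: (disj _ oh1) => /count_memPn -> /count_memPn; rewrite oppK => ->.
  by rewrite orbT.
by rewrite (count_memPn h1) (count_memPn oh1).
Qed.

Lemma lambda_tensor_in_N (s1 s2 : seq (dH G)) (lam1 lam2 : F) :
  edge_disjoint s1 s2 -> is_lambda w s1 lam1 -> is_lambda w s2 lam2 ->
  in_N w [:: (lam1, lam2)].
Proof.
move=> disj L1 L2 h; rewrite big_seq1 /= L1 L2 -intrM.
by rewrite (trav_edge_disjoint _ disj).
Qed.

End Traversals.

Section PathIntegral.
Local Open Scope ring_scope.
Variables (F : fieldExtType rat) (G : dgraph) (w : dH G -> F) (pos : dH G -> C).

Lemma CtoRi_Cexp_path_integral (s1 : seq (dH G)) (lam1 lam2 : F)
    (m : nat) (k : nat -> dH G) (sigma dsigma : nat -> R -> C) :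
  is_lambda w s1 lam1 -> path_on_X w pos lam1 lam2 m k sigma dsigma ->
  CtoRi (Cexp (path_integral w pos lam1 m k sigma dsigma)) =
  \prod_(j < m) \prod_(h | vtx h == vtx (k j))
    ((CtoRi (pos (k j)) - CtoRi (pos h)) /
     (CtoRi (pos (Defs.opp (k (prev_index m j)))) - CtoRi (pos h))) ^ trav s1 h.
Proof.
move=> L1 [segs _]; rewrite /path_integral (big_morph Cexp Cexp_add Cexp0) CtoRi_prod.
apply: eq_bigr => j _; have [_ s0 s1E _ seg] := segs j (ltn_ord j).
have sC1 : C1_path (sigma j) (dsigma j).
  by move=> t /seg [? ? ? ? _]; split.
have avoid h : vtx h == vtx (k j) -> trav s1 h != 0 ->
    forall t, (0 <= t <= 1)%R -> sigma j t <> pos h.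
  move=> /eqP vtx_h trav_h t /seg [_ _ _ _]; apply=> //.
  by rewrite L1; apply/eqP; rewrite intr_eq0.
have [v vI vE] := seg_has_integral_residues (index_enum _) sC1 avoid.
rewrite (seg_integral_unique (seg_has_integral_ext _ vI)) ?vE -?s0 -?s1E // => z.
by apply: eq_bigr => h _; rewrite /res /rat2C L1 ratr_int.
Qed.

Lemma CtoRi_cross_ratio_product (s1 s2 : seq (dH G)) :
  CtoRi (cross_ratio_product pos s1 s2) =
  \prod_(h1 <- s1) \prod_(h2 <- s2 | vtx h1 == vtx h2)
    crossr (CtoRi (pos (loop_out s1 h1))) (CtoRi (pos h1))
           (CtoRi (pos (loop_out s2 h2))) (CtoRi (pos h2)).
Proof.
rewrite CtoRi_prod; apply: eq_bigr => h1 _.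
by rewrite CtoRi_prod; apply: eq_bigr => h2 _; rewrite CtoRi_cross_ratio.
Qed.

End PathIntegral.

Theorem lemma2p2
  (g : nat) (F : fieldExtType rat) (b : 'I_g -> F)
  (G : dgraph) (w : dH G -> F)
  (s1 s2 : seq (dH G)) (lam1 lam2 : F) :
  totally_real_field_of_degree g F ->
  lattice_basis b ->
  weighted_stratum b w ->
  is_loop s1 -> is_loop s2 -> edge_disjoint s1 s2 ->
  is_lambda w s1 lam1 -> is_lambda w s2 lam2 ->
  in_N w [:: (lam1, lam2)] /\
  (simple_loop s1 -> simple_loop s2 ->
   forall (pos : dH G -> C), stratum_point pos ->
   forall (m : nat) (k : nat -> dH G) (sigma dsigma : nat -> R -> C),
     path_on_X w pos lam1 lam2 m k sigma dsigma ->
     Cexp (path_integral w pos lam1 m k sigma dsigma)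
       = cross_ratio_product pos s1 s2).
Proof.
move=> _ _ [opp_props _ _ _ _] [_ s1_cycle] [_ s2_cycle] disj L1 L2.
have oppK : involutive (@Defs.opp G) by move=> h; case: (opp_props h).
split; first exact: lambda_tensor_in_N disj L1 L2.
move=> /map_uniq s1_uniq /map_uniq s2_uniq pos pos_sep m k sigma dsigma path.
pose P h := CtoRi (pos h).
have P_inj h h' : vtx h = vtx h' -> P h = P h' -> h = h'.
  move=> vtx_hh' /CtoRi_inj; have [//|/eqP] := eqVneq h h'.
  by move=> /(pos_sep _ _ vtx_hh').
have [segs cross] := path.
apply: CtoRi_inj; rewrite (CtoRi_Cexp_path_integral L1 path).
rewrite (prod_segment_ratios (P := P) oppK P_inj (t2 := trav s2) (trav_opp oppK s1)).
- under eq_bigr => x _ do under eq_bigr => h _ do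
    rewrite (trav_uniq _ s1_uniq) (trav_uniq _ s2_uniq).
  by rewrite prod_cusp_signs_cross_ratio // CtoRi_cross_ratio_product.
- by move=> j /segs [].
- by move=> j /segs [_ _ _ /eqP]; rewrite L1 intr_eq0 => /eqP.
- by move=> h; apply: (@intr_inj rat); rewrite -L2 -cross.
Qed.
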